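(* Let $M=(Q,\mathcal{A},\Delta,I,F)$ be a complete symbolic finite automaton. Let $n=|Q|$, $m=|\Delta|$, $k$ the size of the largest predicate used in $\Delta$, $m_q$ the number of transitions of $\Delta$ leaving $q$ for each $q\in Q$, and $\hat m=\max\{m_q\mid q\in Q\}$. Then the algorithm NoCountSim described in the context computes $\preceq_M$ in time $$O\Big(n\sum_{q\in Q}m_q^2 + m^2\,\mathcal{C}_{sat}(\hat m,k)\Big).$$
   Context: An effective Boolean algebra is $\mathcal{A}=(\mathfrak{D},\mathbb{P},[\![\cdot]\!],\vee,\wedge,\neg)$ where $\mathbb{P}$ is a set of predicates closed under $\vee,\wedge,\neg$, with an interpretation $[\![\cdot]\!]:\mathbb{P}\to 2^{\mathfrak{D}}$ mapping $\vee,\wedge,\neg$ to union, intersection and complement w.r.t. $\mathfrak{D}$; $\mathit{IsSat}(\varphi)$ means $[\![\varphi]\!]\neq\emptyset$, and the operations and $\mathit{IsSat}$ are computable. Predicates have a measurable size; $\mathcal{C}_{sat}(x,y)$ denotes the worst-case complexity of constructing a predicate obtained by applying $x$ operations of $\mathcal{A}$ to predicates of size at most $y$ and checking its satisfiability. An SFA is $M=(Q,\mathcal{A},\Delta,I,F)$ with finite state set $Q$, finite transition relation $\Delta\subseteq Q\times\mathbb{P}\times Q$ whose predicates are satisfiable, initial states $I$, final states $F$; its concrete transitions are $[\![\Delta]\!]=\{(q,a,p)\mid (q,\psi,p)\in\Delta, a\in[\![\psi]\!]\}$. $M$ is complete if for every $q\in Q$ and $a\in\mathfrak{D}$ there is $p$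 with $(q,a,p)\in[\![\Delta]\!]$. A relation $S\subseteq Q\times Q$ is a simulation on $M$ if whenever $(p,r)\in S$: $p\in F$ implies $r\in F$, and for all $a\in\mathfrak{D}$ and $(p,a,p')\in[\![\Delta]\!]$ there is $(r,a,r')\in[\![\Delta]\!]$ with $(p',r')\in S$; $\preceq_M$ is the unique maximal simulation. For a binary relation $R$ and element $x$, $R(x)=\{y\mid(x,y)\in R\}$. For $q\in Q$ and $J\subseteq Q$, $\Gamma(q,J)=\bigvee_{j\in J}\bigvee_{(q,\psi,j)\in\Delta}\psi$ (the disjunction of the predicates of all transitions from $q$ into $J$), and $q\to J$ means there is a transition of $\Delta$ from $q$ to some state of $J$. Algorithm NoCountSim (input: a complete SFA $M$): 1. Set $\mathit{Sim}:=Q\times Q$ and $\mathit{NotSim}:=F\times(Q\setminus F)$. 2. While there is $i\in Q$ with $\mathit{NotSim}(i)\neq\emptyset$: choose such $i$; set $\mathit{Rm}:=\{t\mid t\to\mathit{NotSim}(i)\}$; remove from $\mathit{Sim}$ all pairs $(i,j)$ with $j\in\mathit{NotSim}(i)$; remove from $\mathit{NotSim}$ all pairs with first component $i$; then for each $t\in\mathit{Rm}$: set $\psi:=\Gamma(t,\mathit{Sim}(i))$, and for every transition $(s,\varphi_{si},i)\in\Delta$ with $(s,t)\in\mathit{Sim}$, if $\mathit{IsSat}(\neg\psi\wedge\varphi_{si})$ then add $(s,t)$ to $\mathit{NotSim}$. 3. Return $\mathit{Sim}$. *)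

From mathcomp Require Import all_boot.
Set Implicit Arguments. Unset Strict Implicit. Unset Printing Implicit Defensive.

(* Computability of the operations and of IsSat is implicit: they are Rocq
   functions.  [psize] is the measurable size of a predicate. *)
Record EBA := {
  eba_dom : Type;
  eba_pred : Type;
  eba_sem : eba_pred -> eba_dom -> Prop;
  eba_or : eba_pred -> eba_pred -> eba_pred;
  eba_and : eba_pred -> eba_pred -> eba_pred;
  eba_neg : eba_pred -> eba_pred;
  eba_size : eba_pred -> nat;
  eba_isSat : eba_pred -> bool;
  eba_sem_or : forall p q a, eba_sem (eba_or p q) a <-> (eba_sem p a \/ eba_sem q a);
  eba_sem_and : forall p q a, eba_sem (eba_and p q) a <-> (eba_sem p a /\ eba_sem q a);
  eba_sem_neg : forall p a, eba_sem (eba_neg p) a <-> ~ eba_sem p a;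
  eba_isSatP : forall p, eba_isSat p = true <-> exists a, eba_sem p a
}.

Record SFA (A : EBA) := {
  sfa_st : finType;
  sfa_tr : finType;
  sfa_src : sfa_tr -> sfa_st;
  sfa_lab : sfa_tr -> eba_pred A;
  sfa_dst : sfa_tr -> sfa_st;
  sfa_init : {set sfa_st};
  sfa_fin : {set sfa_st};
  sfa_lab_sat : forall e, eba_isSat (sfa_lab e) = true
}.

Section SFADefs.
Variables (A : EBA) (M : SFA A).
Local Notation Q := (sfa_st M).
Local Notation E := (sfa_tr M).
Local Notation src := (@sfa_src A M).
Local Notation dst := (@sfa_dst A M).
Local Notation lab := (@sfa_lab A M).

Definition ctrans (q : Q) (a : eba_dom A) (p : Q) : Prop :=
  exists e : E, [/\ src e = q, dst e = p & eba_sem (lab e) a].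

Definition complete : Prop := forall (q : Q) (a : eba_dom A), exists p, ctrans q a p.

Definition is_simulation (S : {set Q * Q}) : Prop :=
  forall p r, (p, r) \in S ->
    (p \in sfa_fin M -> r \in sfa_fin M) /\
    (forall a p', ctrans p a p' -> exists r', ctrans r a r' /\ (p', r') \in S).

Definition is_max_simulation (S : {set Q * Q}) : Prop :=
  is_simulation S /\ forall S', is_simulation S' -> S' \subset S.

Definition img (R : {set Q * Q}) (x : Q) : {set Q} := [set y | (x, y) \in R].

Definition outdeg (q : Q) : nat := #|[set e : E | src e == q]|.
Definition indeg (q : Q) : nat := #|[set e : E | dst e == q]|.
Definition mhat : nat := \max_(q : Q) outdeg q.
Definition kmax : nat := \max_(e : E) eba_size (lab e).

(* Gamma(t, J): the disjunction of the guards of the transitions from t into J.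
   [None] stands for the empty disjunction (bottom). *)
Definition gamma_list (t : Q) (J : {set Q}) : seq (eba_pred A) :=
  [seq lab e | e <- enum E & (src e == t) && (dst e \in J)].
Definition gamma (t : Q) (J : {set Q}) : option (eba_pred A) :=
  if gamma_list t J is p :: ps then Some (foldl (@eba_or A) p ps) else None.
(* IsSat(~psi /\ phi) (with ~bottom /\ phi taken to be phi) *)
Definition check (psi : option (eba_pred A)) (phi : eba_pred A) : bool :=
  if psi is Some p then eba_isSat (eba_and (eba_neg p) phi) else eba_isSat phi.
(* number of Boolean-algebra operations used to build the predicate checked:
   (d-1) disjunctions, one negation, one conjunction for d >= 1 disjuncts *)
Definition gamma_ops (t : Q) (J : {set Q}) : nat :=
  if size (gamma_list t J) is d.+1 then d.+2 else 0.

Definition state := ({set Q * Q} * {set Q * Q})%type.   (* (Sim, NotSim) *)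

Definition init_state : state :=
  ([set: Q * Q], setX (sfa_fin M) (~: sfa_fin M)).

Definition enabled (s : state) (i : Q) : bool := img s.2 i != set0.
Definition halted (s : state) : bool := [forall i, ~~ enabled s i].

Section Body.
Variables (s : state) (i : Q).
Definition NI : {set Q} := img s.2 i.
Definition Rm : {set Q} := [set t | [exists e : E, (src e == t) && (dst e \in NI)]].
Definition Sim1 : {set Q * Q} := s.1 :\: [set (i, j) | j in NI].
Definition NotSim1 : {set Q * Q} := [set x in s.2 | x.1 != i].
Definition added : {set Q * Q} :=
  [set x | [exists t, exists e : E,
     [&& t \in Rm, dst e == i, x == (src e, t), x \in Sim1 &
         check (gamma t (img Sim1 i)) (lab e)]]].
Definition step : state := (Sim1, NotSim1 :|: added).

(* Cost model for one iteration: unit cost for choosing i,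
   for each removed pair, for each predecessor scan when computing Rm, for
   each transition scanned when computing psi, for each transition (s,phi,i)
   examined, plus Csat(#ops, k) for each satisfiability check performed. *)
Definition step_cost (Csat : nat -> nat -> nat) : nat :=
  1 + #|NI| + \sum_(j in NI) indeg j +
  \sum_(t in Rm) (outdeg t +
     \sum_(e : E | dst e == i)
        (1 + (if (src e, t) \in Sim1
              then Csat (gamma_ops t (img Sim1 i)) kmax else 0))).
End Body.

Inductive run (Csat : nat -> nat -> nat) : state -> nat -> state -> Prop :=
| run_stop s : halted s -> run Csat s 0 s
| run_step s i c s' : enabled s i -> run Csat (step s i) c s' ->
    run Csat s (step_cost s i Csat + c) s'.

Definition ncs_next (s' s : state) : Prop := exists i, enabled s i /\ s' = step s i.

End SFADefs.

From mathcomp Require Import all_boot zify.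
From Stdlib Require Import Classical.
Set Implicit Arguments. Unset Strict Implicit. Unset Printing Implicit Defensive.

(* Correctness rests on three invariants of the pair (Sim, NotSim): NotSim is
   contained in Sim, every simulation is contained in Sim \ NotSim, and every
   pair of Sim \ NotSim satisfies the transfer condition of a simulation with
   respect to Sim.  A pair (s, t) is added to NotSim exactly when some letter a
   of a transition s -a-> i has lost its last matching move t -a-> r with
   (i, r) in Sim, which is what IsSat(~ Gamma(t, Sim(i)) /\ phi) detects; so
   when NotSim is empty, Sim is a simulation containing all others.

   For the running time, each pair (i, j) carries a weight paying, when it
   leaves Sim, for the work its removal causes: choosing i and the removal
   itself, scanning the predecessors t of j, computing Gamma(t, Sim(i)) in
   outdeg t steps, and for each such t examining the transitions into i, each
   with a check built from at most outdeg t <= mhat operations (t has a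
   transition into NotSim(i), which is disjoint from the new Sim(i), so Gamma
   has fewer than outdeg t disjuncts).  Summed over Q x Q these weights give
   the bound, with m^2 <= n * sum_q m_q^2 by Cauchy-Schwarz. *)

Lemma leq_sum_imset (I J : finType) (h : I -> J) (D : {pred I}) (G : J -> nat) :
  \sum_(j in h @: D) G j <= \sum_(i in D) G (h i).
Proof.
rewrite [leqRHS](partition_big_imset h) /=; apply: leq_sum => _ /imsetP[i Di ->].
by rewrite (bigD1 i) ?Di ?eqxx //= leq_addr.
Qed.

Lemma sum_card_fibres (I J : finType) (f : I -> J) :
  \sum_(j : J) #|[set i | f i == j]| = #|I|.
Proof.
rewrite -[RHS]sum1_card (partition_big f predT) //=; apply: eq_bigr => j _.
by rewrite sum_nat_cond_const muln1.
Qed.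

Lemma sqr_sum_leq (T : finType) (a : T -> nat) :
  (\sum_(x : T) a x) ^ 2 <= #|T| * \sum_(x : T) a x ^ 2.
Proof.
have two_mul_leq (u v : nat) : 2 * (u * v) <= u ^ 2 + v ^ 2.
  by case: (leqP v u) => [/subnK|/ltnW/subnK] <-; move: (_ - _) => d; nia.
have -> : (\sum_x a x) ^ 2 = \sum_x \sum_y a x * a y.
  by rewrite -mulnn big_distrl; apply: eq_bigr => x _; rewrite big_distrr.
have sum_sq : \sum_x \sum_y (a x ^ 2 + a y ^ 2) = 2 * (#|T| * \sum_x a x ^ 2).
  under eq_bigr do rewrite big_split /= sum_nat_const.
  by rewrite big_split /= sum_nat_const -big_distrr /= mulnC; lia.
rewrite -(leq_pmul2l (isT : 0 < 2)) -sum_sq big_distrr leq_sum //= => x _.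
by rewrite big_distrr leq_sum // => y _; apply: two_mul_leq.
Qed.

Section NoCountSim.
Variables (A : EBA) (M : SFA A).
Local Notation Q := (sfa_st M).
Local Notation E := (sfa_tr M).
Local Notation src := (@sfa_src A M).
Local Notation dst := (@sfa_dst A M).
Local Notation lab := (@sfa_lab A M).
Local Notation sem := (@eba_sem A).

Lemma sem_foldl_or (T : eqType) (f : T -> eba_pred A) p l a :
  sem (foldl (@eba_or A) p (map f l)) a <-> sem p a \/ exists2 y, y \in l & sem (f y) a.
Proof.
elim: l p => [|y l IH] p /=; first by split=> [|[//|[y]]]; [left | rewrite in_nil].
rewrite IH eba_sem_or; split=> [[[|fy]|[z zl fz]]|[|[z]]].
- by left.
- by right; exists y; rewrite ?mem_head.
- by right; exists z; rewrite // in_cons zl orbT.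
- by left; left.
- by rewrite in_cons => /orP[/eqP-> fy|zl fz]; [left; right | right; exists z].
Qed.

Lemma sem_gamma (t : Q) (J : {set Q}) a :
  (exists2 g, gamma t J = Some g & sem g a) <-> exists2 r, ctrans t a r & r \in J.
Proof.
set l := [seq e <- enum E | (src e == t) && (dst e \in J)].
have mem_l e : (e \in l) = (src e == t) && (dst e \in J) by rewrite mem_filter mem_enum andbT.
have -> : (exists2 r, ctrans t a r & r \in J) <-> exists2 e, e \in l & sem (lab e) a.
  split=> [[r [e [se de ae]] rJ] | [e]]; first by exists e; rewrite // mem_l se de eqxx.
  by rewrite mem_l => /andP[/eqP<- eJ] ae; exists (dst e) => //; exists e.
rewrite /gamma /gamma_list -/l; case: l {mem_l} => [|e l] /=; first by split=> [[]|[]].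
split=> [[_ [<-] /sem_foldl_or[ae|[e' e'l ae']]] | [e' e'l ae']].
- by exists e; rewrite ?mem_head.
- by exists e'; rewrite // in_cons e'l orbT.
exists (foldl (@eba_or A) (lab e) (map lab l)) => //; apply/sem_foldl_or.
by move: e'l; rewrite in_cons => /orP[/eqP<-|e'l]; [left | right; exists e'].
Qed.

Lemma check_gammaP (t : Q) (J : {set Q}) phi :
  check (gamma t J) phi <-> exists a, sem phi a /\ ~ exists2 r, ctrans t a r & r \in J.
Proof.
rewrite /check; case def_g: (gamma t J) => [g|]; split.
- move/eba_isSatP=> [a /eba_sem_and[/eba_sem_neg ng pa]]; exists a; split=> //.
  by case/sem_gamma=> g'; rewrite def_g => -[<-].
- move=> [a [pa nJ]]; apply/eba_isSatP; exists a; apply/eba_sem_and; split=> //.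
  by apply/eba_sem_neg => ga; apply: nJ; apply/sem_gamma; exists g.
- move/eba_isSatP=> [a pa]; exists a; split=> //.
  by case/sem_gamma=> g'; rewrite def_g.
- by move=> [a [pa _]]; apply/eba_isSatP; exists a.
Qed.

Lemma check_gammaPn (t : Q) (J : {set Q}) phi a :
  ~~ check (gamma t J) phi -> sem phi a -> exists2 r, ctrans t a r & r \in J.
Proof.
move=> /negP nc pa; apply: NNPP => nJ; apply: nc; apply/check_gammaP; by exists a.
Qed.

Definition transfer (S : {set Q * Q}) (p r : Q) : Prop :=
  (p \in sfa_fin M -> r \in sfa_fin M) /\
  forall a p', ctrans p a p' -> exists r', ctrans r a r' /\ (p', r') \in S.

Record invariant (s : state M) : Prop := Invariant {
  notsim_sub : s.2 \subset s.1;
  simulation_sub : forall S, is_simulation S -> S \subset s.1 :\: s.2;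
  transfer_sim : forall p r, (p, r) \in s.1 :\: s.2 -> transfer s.1 p r }.

Lemma init_invariant : complete M -> invariant (init_state M).
Proof.
move=> compl; split=> [|S simS|p r]; first exact: subsetT.
- apply/subsetP=> -[p r] pr; rewrite !inE /= andbT negb_and negbK.
  by case: (simS p r pr) => /implyP; rewrite implybE.
- rewrite !inE /= andbT negb_and negbK => /orP pr; split.
    by case: pr => [/negbTE-> | ->].
  by move=> a p' _; have [r' ar'] := compl r a; exists r'; rewrite inE.
Qed.

Section Step.
Variables (s : state M) (i : Q).

Lemma mem_Sim1 p r :
  ((p, r) \in Sim1 s i) = ((p, r) \in s.1) && ~~ ((p == i) && ((p, r) \in s.2)).
Proof.
rewrite inE andbC; congr (_ && ~~ _); apply/imsetP/andP=> [[j jN [-> ->]]|[/eqP-> pr]].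
  by move: jN; rewrite inE eqxx.
by exists r; rewrite // inE.
Qed.

Lemma NI_img_Sim1 j : j \in NI s i -> j \notin img (Sim1 s i) i.
Proof. by rewrite [_ \in img _ _]inE mem_Sim1 eqxx inE => ->; rewrite andbF. Qed.

Lemma step_notsim_sub : s.2 \subset s.1 -> (step s i).2 \subset (step s i).1.
Proof.
move=> sub; apply/subsetP=> -[p r]; rewrite in_setU inE /= => /orP[/andP[pr pi]|].
  by rewrite mem_Sim1 (subsetP sub _ pr) (negbTE pi).
by rewrite inE => /existsP[t /existsP[e /and5P[_ _ /eqP-> ? _]]].
Qed.

Lemma step_card_lt : s.2 \subset s.1 -> enabled s i -> #|(step s i).1| < #|s.1|.
Proof.
move=> sub /set0Pn[j]; rewrite inE => ij; apply/proper_card/properP; split.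
  exact: subsetDl.
by exists (i, j); rewrite ?(subsetP sub) // mem_Sim1 eqxx ij andbF.
Qed.

Lemma step_simulation_sub (inv : invariant s) S :
  is_simulation S -> S \subset (step s i).1 :\: (step s i).2.
Proof.
move=> simS; have S_sub := simulation_sub inv simS.
have S_Sim1 : S \subset Sim1 s i.
  apply/subsetP=> -[p r] /(subsetP S_sub); rewrite inE => /andP[nsp sp].
  by rewrite mem_Sim1 sp (negbTE nsp) andbF.
apply/subsetP=> -[p r] pr; rewrite inE (subsetP S_Sim1 _ pr) andbT in_setU negb_or.
have := subsetP S_sub _ pr; rewrite inE => /andP[nsp _].
rewrite inE (negbTE nsp) /= inE; apply/negP=> /existsP[t /existsP[e]].
case/and5P=> _ /eqP de /eqP[ps rt] _ /check_gammaP[a [ae no_move]]; subst p r.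
have [_ /(_ a i)[|r' [tar' ir']]] := simS _ _ pr; first by exists e.
by apply: no_move; exists r'; rewrite // inE (subsetP S_Sim1).
Qed.

Lemma step_transfer (inv : invariant s) p r :
  (p, r) \in (step s i).1 :\: (step s i).2 -> transfer (step s i).1 p r.
Proof.
rewrite inE in_setU negb_or => /andP[/andP[nNS nadd] pS1].
have sp : (p, r) \in s.1 :\: s.2.
  move: pS1 nNS; rewrite mem_Sim1 !inE /=.
  by case: (p == i); case: ((p, r) \in s.1); case: ((p, r) \in s.2).
have [pF_rF trans] := transfer_sim inv sp; split=> // a p' pap'.
have [r' [rar' pr']] := trans a p' pap'.
have [|] := boolP ((p', r') \in Sim1 s i); first by exists r'.
rewrite mem_Sim1 pr' negbK => /andP[/eqP def_p' ir'_NS]; subst p'.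
have [e [se de ae]] := pap'.
case chk: (check (gamma r (img (Sim1 s i) i)) (lab e)); last first.
  have [r'' rar'' ir''] := check_gammaPn (negbT chk) ae.
  by exists r''; rewrite inE in ir''.
have [e' [se' de' _]] := rar'.
case/negP: nadd; rewrite inE; apply/existsP; exists r; apply/existsP; exists e.
rewrite se de pS1 chk !eqxx !andbT inE; apply/existsP; exists e'.
by rewrite se' de' eqxx inE ir'_NS.
Qed.

Lemma step_invariant : invariant s -> invariant (step s i).
Proof.
move=> inv; split; [exact/step_notsim_sub/notsim_sub | |].
- exact: step_simulation_sub.
- exact: step_transfer.
Qed.

End Step.

Lemma halted_notsim0 (s : state M) : halted s -> s.2 = set0.
Proof.
move=> /forallP halt; apply/setP=> -[p r]; rewrite inE; apply/negP=> pr.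
by case/negP: (halt p); apply/set0Pn; exists r; rewrite inE.
Qed.

Lemma acc_ncs_next (s : state M) : s.2 \subset s.1 -> Acc (@ncs_next A M) s.
Proof.
move: {2}#|s.1|.+1 (ltnSn #|s.1|) => n; elim: n s => [//|n IH] s lt_sn sub.
constructor=> _ [i [en ->]]; apply: IH; last exact: step_notsim_sub.
exact: leq_trans (step_card_lt sub en) lt_sn.
Qed.

Lemma run_max_simulation Csat (s sf : state M) c :
  run Csat s c sf -> invariant s -> is_max_simulation sf.1.
Proof.
elim=> {s c sf} [s /halted_notsim0 ns0 | s i c sf _ _ IH] inv;
  last exact/IH/step_invariant.
split=> [p r pr | S simS]; first by apply: (transfer_sim inv); rewrite ns0 setD0.
by rewrite -(setD0 s.1) -ns0; apply: simulation_sub.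
Qed.

Definition in_edges (N : {set Q}) : {set E} := [set e | dst e \in N].

Lemma sum_in_edges (N : {set Q}) (f : E -> nat) :
  \sum_(e in in_edges N) f e = \sum_(j in N) \sum_(e | dst e == j) f e.
Proof.
rewrite (partition_big dst (mem N)) => [|e]; last by rewrite inE.
apply: eq_bigr => j jN; apply: eq_bigl => e; rewrite inE.
by rewrite andbC; case: eqP => // ->; apply: jN.
Qed.

Lemma card_in_edges (N : {set Q}) : #|in_edges N| = \sum_(j in N) indeg j.
Proof.
rewrite -sum1_card sum_in_edges; apply: eq_bigr => j _.
by rewrite sum_nat_cond_const muln1.
Qed.

Lemma Rm_imset (s : state M) i : Rm s i = src @: in_edges (NI s i).
Proof.
apply/setP=> t; rewrite inE; apply/existsP/imsetP=> [[e /andP[/eqP<- eN]]|[e]].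
  by exists e; rewrite // /in_edges in_set.
by rewrite /in_edges in_set => eN ->; exists e; rewrite eqxx.
Qed.

Lemma sum_indeg : \sum_(q : Q) indeg q = #|E|.
Proof. exact: sum_card_fibres. Qed.

Lemma sum_outdeg : \sum_(q : Q) outdeg q = #|E|.
Proof. exact: sum_card_fibres. Qed.

Lemma sum_outdeg_src : \sum_(e : E) outdeg (src e) = \sum_(q : Q) outdeg q ^ 2.
Proof.
rewrite (partition_big src predT) //=; apply: eq_bigr => q _.
by rewrite (eq_bigr (fun _ => outdeg q)) => [|e /eqP->//]; rewrite sum_nat_cond_const.
Qed.

Lemma outdeg_gt0 (q : Q) : complete M -> eba_dom A -> 0 < outdeg q.
Proof.
move=> compl a; have [_ [e [se _ _]]] := compl q a.
by rewrite card_gt0; apply/set0Pn; exists e; rewrite inE se.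
Qed.

Lemma gamma_ops_leq_outdeg (t : Q) (J : {set Q}) e :
  src e = t -> dst e \notin J -> gamma_ops t J <= outdeg t.
Proof.
move=> se eJ; suff : size (gamma_list t J) < outdeg t.
  by rewrite /gamma_ops; case: (size _).
have -> : size (gamma_list t J) = #|[set e | (src e == t) && (dst e \in J)]|.
  rewrite size_map size_filter cardE /enum_mem size_filter count_filter.
  by apply: eq_count => e'; rewrite !inE andbT.
apply/proper_card/properP; split; first by apply/subsetP=> e'; rewrite !inE => /andP[].
by exists e; rewrite !inE se eqxx //= (negbTE eJ).
Qed.

Definition pair_weight (K : nat) (x : Q * Q) : nat :=
  2 + indeg x.2 + \sum_(e | dst e == x.2) outdeg (src e) + indeg x.2 * (indeg x.1 * K.+1).

Definition potential (K : nat) (S : {set Q * Q}) : nat := \sum_(x in S) pair_weight K x.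

Lemma potential_step K (s : state M) i : s.2 \subset s.1 ->
  potential K s.1 = potential K (step s i).1 + \sum_(j in NI s i) pair_weight K (i, j).
Proof.
move=> sub; rewrite /potential (big_setID [set (i, j) | j in NI s i]) addnC /=.
rewrite (setIidPr _) ?big_imset // => [j j' _ _ [] //|].
by apply/subsetP=> _ /imsetP[j jN ->]; apply: (subsetP sub); rewrite inE in jN.
Qed.

Lemma potential_setT K : potential K [set: Q * Q] =
  #|Q| * (2 * #|Q| + #|E| + \sum_(q : Q) outdeg q ^ 2) + #|E| * (#|E| * K.+1).
Proof.
have sum_dst f : \sum_(j : Q) \sum_(e | dst e == j) f e = \sum_(e : E) f e.
  by rewrite [RHS](partition_big dst predT).
rewrite /potential (eq_bigl predT) => [|x]; last by rewrite inE.
rewrite -(pair_big predT predT (fun i j => pair_weight K (i, j))) /=.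
under eq_bigr do rewrite !big_split /= sum_nat_const sum_indeg sum_dst sum_outdeg_src
  -big_distrl /= sum_indeg.
by rewrite big_split /= sum_nat_const -big_distrr -big_distrl /= sum_indeg [_ * 2]mulnC.
Qed.

Lemma potential_setT_le K : (forall q : Q, 0 < outdeg q) ->
  #|Q| ^ 2 + potential K [set: Q * Q] <=
  6 * (#|Q| * \sum_(q : Q) outdeg q ^ 2 + #|E| ^ 2 * K).
Proof.
move=> outdeg_pos; rewrite potential_setT.
have n_le : #|Q| <= \sum_(q : Q) outdeg q ^ 2.
  by rewrite -sum1_card leq_sum // => q _; rewrite expn_gt0 outdeg_pos.
have m_le : #|E| <= \sum_(q : Q) outdeg q ^ 2.
  by rewrite -sum_outdeg leq_sum // => q _; rewrite -mulnn leq_pmulr.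
have m2_le : #|E| ^ 2 <= #|Q| * \sum_(q : Q) outdeg q ^ 2.
  by rewrite -sum_outdeg sqr_sum_leq.
nia.
Qed.

Section Cost.
Variable Csat : nat -> nat -> nat.
Hypothesis Csat_monotone : forall x x' y y', x <= x' -> y <= y' -> Csat x y <= Csat x' y'.
Local Notation K := (Csat (mhat M) (kmax M)).

Lemma checks_cost_le (s : state M) i t : t \in Rm s i ->
  \sum_(e | dst e == i) (1 + (if (src e, t) \in Sim1 s i
     then Csat (gamma_ops t (img (Sim1 s i) i)) (kmax M) else 0)) <= indeg i * K.+1.
Proof.
rewrite Rm_imset => /imsetP[e0 + ->]; rewrite /in_edges in_set => /NI_img_Sim1 e0J.
rewrite /indeg -sum_nat_cond_const leq_sum // => e _; rewrite ltnS; case: ifP => // _.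
apply: Csat_monotone => //; apply: leq_trans (leq_bigmax (src e0)).
exact: gamma_ops_leq_outdeg e0J.
Qed.

Lemma step_cost_le (s : state M) i : s.2 \subset s.1 -> enabled s i ->
  step_cost s i Csat + potential K (step s i).1 <= potential K s.1.
Proof.
move=> sub en; rewrite (potential_step _ i sub) addnC leq_add2l /step_cost.
set N := NI s i; set D := in_edges N; set loop := \sum_(t in Rm s i) _.
have N_gt0 : 0 < #|N| by rewrite card_gt0.
have loop_le : loop <= \sum_(e in D) outdeg (src e) + #|D| * (indeg i * K.+1).
  rewrite /loop big_split /= leq_add //; first by rewrite Rm_imset leq_sum_imset.
  apply: (@leq_trans (\sum_(t in Rm s i) indeg i * K.+1)).
    by apply: leq_sum => t; apply: checks_cost_le.
  by rewrite sum_nat_const leq_mul2r Rm_imset leq_imset_card orbT.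
rewrite /pair_weight /= !big_split /= sum_nat_const -big_distrl /=.
rewrite -sum_in_edges -card_in_edges -/D; lia.
Qed.

Lemma run_cost_le (s sf : state M) c : run Csat s c sf -> s.2 \subset s.1 ->
  c + potential K sf.1 <= potential K s.1.
Proof.
elim=> {s c sf} [s _ | s i c sf en _ IH] sub; first by rewrite add0n.
have := IH (step_notsim_sub i sub); have := step_cost_le sub en; lia.
Qed.

End Cost.
End NoCountSim.

Theorem lemma5 :
  exists C : nat,
  forall (A : EBA) (Csat : nat -> nat -> nat),
    (forall x x' y y', x <= x' -> y <= y' -> Csat x y <= Csat x' y') ->
  forall M : SFA A,
    inhabited (eba_dom A) ->
    complete M ->
    (* every run of NoCountSim terminates *)
    Acc (@ncs_next A M) (init_state M) /\
    (* and every terminated run returns preceq_M, within the time bound *)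
    forall (c : nat) (sf : state M),
      run Csat (init_state M) c sf ->
      is_max_simulation sf.1 /\
      #|sfa_st M| ^ 2 + c <=
        C * (#|sfa_st M| * (\sum_(q : sfa_st M) outdeg q ^ 2)
             + #|sfa_tr M| ^ 2 * Csat (mhat M) (kmax M)).
Proof.
exists 6 => A Csat Csat_monotone M [a] compl; split; first exact/acc_ncs_next/subsetT.
move=> c sf run_sf; split; first exact: run_max_simulation run_sf (init_invariant compl).
apply: leq_trans (potential_setT_le _ (fun q => outdeg_gt0 q compl a)).
rewrite leq_add2l; apply: leq_trans (run_cost_le Csat_monotone run_sf (subsetT _)).
exact: leq_addr.
Qed.
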